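(* Let $G$ be a digraph such that $d^+_G(x)+d^-_G(x)\ge |G|+3$ for every vertex $x\in G$ and $d^+_G(x)+d^-_G(y)\ge |G|+1$ for every pair of vertices $x,y\in G$. Let $z_1,z_2$ be distinct vertices of $G$ such that $z_1z_2\notin E(G)$. Then there exists a vertex $a\in N^+_G(z_1)\cap N^-_G(z_2)$ such that $G-\{z_1,z_2,a\}$ is strongly connected.
   Context: Digraphs have no loops and at most one edge in each direction between any two vertices. $N^+_G(x)$ and $N^-_G(x)$ are the out- and in-neighbourhoods of $x$ in $G$, and $d^\pm_G(x)=|N^\pm_G(x)|$. A digraph is strongly connected if for every ordered pair $x,y$ of vertices there is a directed $x$-$y$ path. *)

(* A digraph on a finite vertex type T is an irreflexive
   relation e : rel T (e x y = there is an arc x -> y); a relation automatically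
   has at most one arc in each direction between two vertices. *)
From mathcomp Require Import all_boot.
Set Implicit Arguments. Unset Strict Implicit. Unset Printing Implicit Defensive.

Definition loopless (T : finType) (e : rel T) : Prop := forall x, ~~ e x x.

Definition outN (T : finType) (e : rel T) (x : T) : {set T} := [set y | e x y].
Definition inN (T : finType) (e : rel T) (x : T) : {set T} := [set y | e y x].

Definition induced_rel (T : finType) (e : rel T) (S : {set T}) : rel T :=
  fun u v => [&& u \in S, v \in S & e u v].

Definition strongly_connected_on (T : finType) (e : rel T) (S : {set T}) : Prop :=
  forall x y, x \in S -> y \in S -> connect (induced_rel e S) x y.

(* If the removal of S = {z1, z2, c} leaves a digraph that is not strong, the
   degree conditions force the rest to split into a source side X and a sink
   side Y, each of size at least 2, with no arc from X to Y, and with every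
   vertex of S sending an arc to every vertex of Y (and, dually, receiving one
   from every vertex of X).  Since z1 z2 is not an arc, the pair condition gives
   at least three common neighbours c in N+(z1) ∩ N-(z2).  For two of them, c1
   and c2, both splits cannot exist: c2 lies on one side of the split for c1,
   say in X1 (the other case is the same argument in the converse digraph);
   as c2 dominates Y2, a vertex y of Y1 lies in X2 and a vertex w of Y2 other
   than c1 lies in X1.  The four non-adjacency constraints on w and y then
   bound d(w) + d(y) by 2|G| + 2, against 2|G| + 6. *)
From mathcomp Require Import all_boot zify.

Set Implicit Arguments.
Unset Strict Implicit.
Unset Printing Implicit Defensive.

Definition converse (T : finType) (e : rel T) : rel T := fun x y => e y x.

Section Converse.
Variables (T : finType) (e : rel T).

Lemma outN_converse x : outN (converse e) x = inN e x.
Proof. by apply/setP => y; rewrite !inE. Qed.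

Lemma inN_converse x : inN (converse e) x = outN e x.
Proof. by apply/setP => y; rewrite !inE. Qed.

Lemma loopless_converse : loopless e -> loopless (converse e).
Proof. by []. Qed.

Lemma total_degree_converse k :
  (forall x, #|outN e x| + #|inN e x| >= k) ->
  forall x, #|outN (converse e) x| + #|inN (converse e) x| >= k.
Proof. by move=> deg x; rewrite outN_converse inN_converse addnC. Qed.

Lemma pair_degree_converse k :
  (forall x y, x != y -> #|outN e x| + #|inN e y| >= k) ->
  forall x y, x != y -> #|outN (converse e) x| + #|inN (converse e) y| >= k.
Proof.
by move=> deg x y; rewrite outN_converse inN_converse addnC eq_sym; apply: deg.
Qed.

End Converse.

Section Dicut.
Variables (T : finType) (e : rel T).

Definition dicut (A X : {set T}) : Prop :=
  [/\ X \subset A, X != set0, A :\: X != set0 &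
      {in X & A :\: X, forall x y, ~~ e x y}].

Lemma dicut_card A X : dicut A X -> #|X| + #|A :\: X| = #|A|.
Proof. by case=> /setIidPr XA _ _ _; rewrite -[in #|X|]XA cardsID. Qed.

Lemma strongly_connected_or_dicut A :
  strongly_connected_on e A \/ exists X, dicut A X.
Proof.
set r := induced_rel e A.
have [/existsP[u /existsP[v /and3P[uA vA uv]]] | ] :=
  boolP [exists u, exists v, [&& u \in A, v \in A & ~~ connect r u v]].
  right; exists [set w in A | connect r u w]; split.
  - by apply/subsetP => w; rewrite inE => /andP[].
  - by apply/set0Pn; exists u; rewrite inE uA connect0.
  - by apply/set0Pn; exists v; rewrite !inE vA (negbTE uv).
  move=> x y; rewrite !inE => /andP[xA ux] /andP[+ yA]; rewrite yA /= => uy.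
  apply: contra uy => exy; apply: connect_trans ux (connect1 _).
  by rewrite /r /induced_rel xA yA exy.
rewrite negb_exists => /forallP noncon; left => x y xA yA.
by move: (noncon x); rewrite negb_exists => /forallP/(_ y); rewrite xA yA negbK.
Qed.

End Dicut.

Lemma dicut_converse (T : finType) (e : rel T) (A X : {set T}) :
  dicut e A X -> dicut (converse e) A (A :\: X).
Proof.
case=> XA X0 Y0 noarc; have AYX : A :\: (A :\: X) = X.
  by rewrite setDDr setDv set0U; apply/setIidPr.
split; rewrite ?AYX ?subsetDl // => y x yY xX.
exact: noarc.
Qed.

Lemma card_subsetC1U (T : finType) (N B : {set T}) x :
  x \notin B -> N \subset ~: (x |: B) -> #|N| + #|B| < #|T|.
Proof.
move=> xB /subset_leq_card; have := cardsC (x |: B).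
by rewrite cardsU1 xB; lia.
Qed.

Section DegreeConditions.
Variables (T : finType) (e : rel T).
Hypothesis e_loopless : loopless e.
Hypothesis total_degree : forall x, #|outN e x| + #|inN e x| >= #|T| + 3.
Hypothesis pair_degree :
  forall x y, x != y -> #|outN e x| + #|inN e y| >= #|T| + 1.

Lemma card_outN_lt x : #|outN e x| < #|T|.
Proof.
have xN : x \notin outN e x by rewrite inE e_loopless.
rewrite -cardsT proper_card // properT.
by apply: contraNneq xN => ->; exact: in_setT.
Qed.

Section Split.
Variables (A X : {set T}).
Hypothesis AX : dicut e A X.

Lemma dicut_outN_card x : x \in X -> #|outN e x| + #|A :\: X| < #|T|.
Proof.
case: AX => _ _ _ noarc xX.
apply: (card_subsetC1U (x := x)); first by rewrite in_setD xX.
apply/subsetP => y; rewrite inE in_setC in_setU1 negb_or => exy.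
apply/andP; split.
  by apply: contraTneq exy => ->; apply: e_loopless.
by apply/negP => yY; move: (noarc x y xX yY); rewrite exy.
Qed.

Lemma dicut_inN_card y : y \in A :\: X -> #|inN e y| + #|X| < #|T|.
Proof.
case: AX => _ _ _ noarc yY; apply: (card_subsetC1U (x := y)).
  by move: yY; rewrite inE => /andP[].
apply/subsetP => x; rewrite inE in_setC in_setU1 negb_or => exy.
apply/andP; split.
  by apply: contraTneq exy => ->; apply: e_loopless.
by apply/negP => xX; move: (noarc x y xX yY); rewrite exy.
Qed.

Hypothesis A_card : #|A| + 3 = #|T|.

Lemma dicut_sink_card : 1 < #|A :\: X|.
Proof.
have [y yY] := set0Pn _ (let: And4 _ _ Y0 _ := AX in Y0).
have := dicut_inN_card yY; have := card_outN_lt y; have := total_degree y.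
have := dicut_card AX; lia.
Qed.

(* The pair condition makes every in-neighbourhood on the sink side as large as
   the split allows, so it must contain all of ~: A. *)
Lemma dicut_dominates_sink s y : s \notin A -> y \in A :\: X -> e s y.
Proof.
move=> sA yY; have [x xX] := set0Pn _ (let: And4 _ X0 _ _ := AX in X0).
have XA : X \subset A by case: AX.
have /andP[yX yA] : (y \notin X) && (y \in A) by rewrite -in_setD.
have xy : x != y by apply: contraTneq yY => <-; rewrite inE xX.
apply/contraT => nesy.
have := pair_degree xy; have := dicut_outN_card xX.
have : #|inN e y| + #|s |: X| < #|T|.
  apply: (card_subsetC1U (x := y)).
    by rewrite in_setU1 negb_or yX andbT; apply: contraNneq sA => <-.
  apply/subsetP => w; rewrite inE in_setC !in_setU1 !negb_or => ewy.
  apply/and3P; split.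
  - by apply: contraTneq ewy => ->; apply: e_loopless.
  - by apply: contraTneq ewy => ->.
  - case: AX => _ _ _ noarc; apply/negP => wX.
    by move: (noarc w y wX yY); rewrite ewy.
rewrite cardsU1 (contraNN (subsetP XA s) sA); have := dicut_card AX; lia.
Qed.

End Split.

Lemma dicuts_noncrossing (A1 X1 A2 X2 : {set T}) w y :
  #|A1| + 3 = #|T| -> #|A2| + 3 = #|T| -> dicut e A1 X1 -> dicut e A2 X2 ->
  w \in X1 -> w \in A2 :\: X2 -> y \in A1 :\: X1 -> y \in X2 -> False.
Proof.
move=> A1_card A2_card cut1 cut2 wX1 wY2 yY1 yX2.
have := dicut_outN_card cut1 wX1; have := dicut_inN_card cut2 wY2.
have := dicut_outN_card cut2 yX2; have := dicut_inN_card cut1 yY1.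
have := total_degree w; have := total_degree y.
have := dicut_card cut1; have := dicut_card cut2; lia.
Qed.

Lemma notin_setD1_eq (S1 S2 : {set T}) c1 c2 v :
  S1 :\ c1 = S2 :\ c2 -> v \notin S1 -> v != c2 -> v \notin S2.
Proof.
move=> eqS vS1 vc2; apply: contra vS1 => vS2.
have : v \in S2 :\ c2 by rewrite in_setD1 vc2 vS2.
by rewrite -eqS in_setD1 => /andP[].
Qed.

Lemma dicut_exchange (S1 S2 X1 X2 : {set T}) c1 c2 :
  #|S1| = 3 -> #|S2| = 3 -> S1 :\ c1 = S2 :\ c2 -> c2 \in S2 ->
  dicut e (~: S1) X1 -> dicut e (~: S2) X2 -> c2 \notin X1.
Proof.
move=> S1_card S2_card eqS c2S2 cut1 cut2; apply/negP => c2X1.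
have A1_card : #|~: S1| + 3 = #|T| by rewrite -S1_card addnC cardsC.
have A2_card : #|~: S2| + 3 = #|T| by rewrite -S2_card addnC cardsC.
have [_ _ Y1_0 noarc1] := cut1.
have c2_to_Y2 : forall v, v \in ~: S2 :\: X2 -> e c2 v.
  by move=> v; apply: dicut_dominates_sink; rewrite // inE negbK.
have notin_Y1 : forall v, e c2 v -> v \notin ~: S1 :\: X1.
  by move=> v; apply: contraL => vY1; exact: noarc1 c2X1 vY1.
have [y yY1] := set0Pn _ Y1_0.
have yX2 : y \in X2.
  have /andP[yX1 yA1] : (y \notin X1) && (y \in ~: S1) by rewrite -in_setD.
  have yA2 : y \in ~: S2.
    rewrite in_setC (notin_setD1_eq eqS) -?in_setC //.
    by apply: contraNneq yX1 => ->.
  apply: contraT => yX2; have yY2 : y \in ~: S2 :\: X2 by rewrite in_setD yX2.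
  by move: (notin_Y1 _ (c2_to_Y2 _ yY2)); rewrite yY1.
have [w] : exists w, w \in (~: S2 :\: X2) :\ c1.
  apply/set0Pn; rewrite -card_gt0.
  have := dicut_sink_card cut2 A2_card; have := cardsD1 c1 (~: S2 :\: X2).
  have := leq_b1 (c1 \in ~: S2 :\: X2); lia.
rewrite in_setD1 => /andP[wc1 wY2].
have wX1 : w \in X1.
  have /andP[wX2 wA2] : (w \notin X2) && (w \in ~: S2) by rewrite -in_setD.
  have wA1 : w \in ~: S1.
    by rewrite in_setC (notin_setD1_eq (esym eqS)) -?in_setC.
  apply: contraT => wX1; move: (notin_Y1 _ (c2_to_Y2 _ wY2)).
  by rewrite in_setD wX1 wA1.
exact: (dicuts_noncrossing A1_card A2_card cut1 cut2 wX1 wY2 yY1 yX2).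
Qed.

Lemma common_neighbour_notin z1 z2 c :
  c \in outN e z1 :&: inN e z2 -> c \notin [set z1; z2].
Proof.
rewrite !inE negb_or => /andP[ez1c ecz2]; apply/andP; split.
  by apply: contraTneq ez1c => ->; apply: e_loopless.
by apply: contraTneq ecz2 => ->; apply: e_loopless.
Qed.

Lemma card_common_neighbours z1 z2 :
  z1 != z2 -> ~~ e z1 z2 -> 3 <= #|outN e z1 :&: inN e z2|.
Proof.
move=> z12 nez12.
have : outN e z1 :|: inN e z2 \subset ~: [set z1; z2].
  apply/subsetP => v; rewrite in_setC !inE negb_or => /orP[] evz.
    apply/andP; split; [apply: contraTneq evz => ->; exact: e_loopless|].
    by apply: contraTneq evz => ->.
  apply/andP; split; first by apply: contraTneq evz => ->.
  by apply: contraTneq evz => ->; apply: e_loopless.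
move/subset_leq_card; have := cardsUI (outN e z1) (inN e z2).
have := cardsC [set z1; z2]; rewrite cards2 z12.
have := pair_degree z12; lia.
Qed.

End DegreeConditions.

Theorem lemma9 (T : finType) (e : rel T) (Hloop : loopless e)
  (Hdeg : forall x, #|outN e x| + #|inN e x| >= #|T| + 3)
  (Hpair : forall x y, x != y -> #|outN e x| + #|inN e y| >= #|T| + 1)
  (z1 z2 : T) (Hz : z1 != z2) (Hnot : ~~ e z1 z2) :
  exists a, [/\ a \in outN e z1 :&: inN e z2 &
    strongly_connected_on e (~: [set z1; z2; a])].
Proof.
set C := outN e z1 :&: inN e z2.
have C_card : 3 <= #|C| := card_common_neighbours Hloop Hpair Hz Hnot.
have [c1 c1C] : exists c, c \in C by apply/set0Pn; rewrite -card_gt0; lia.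
have [c2 c2C c21] : exists2 c, c \in C & c != c1.
  have [c] : exists c, c \in C :\ c1.
    by apply/set0Pn; rewrite -card_gt0; have := cardsD1 c1 C; rewrite c1C; lia.
  by rewrite in_setD1 => /andP[]; exists c.
have S_card c : c \in C -> #|[set z1; z2; c]| = 3.
  move/(common_neighbour_notin Hloop) => cZ.
  by rewrite setUC cardsU1 cZ cards2 Hz.
have S_del c : c \in C -> [set z1; z2; c] :\ c = [set z1; z2].
  by move/(common_neighbour_notin Hloop) => cZ; rewrite setUC setU1K.
have [|[X1 cut1]] := strongly_connected_or_dicut e (~: [set z1; z2; c1]).
  by exists c1.
have [|[X2 cut2]] := strongly_connected_or_dicut e (~: [set z1; z2; c2]).
  by exists c2.
have eqS : [set z1; z2; c1] :\ c1 = [set z1; z2; c2] :\ c2 by rewrite !S_del.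
have c2S2 : c2 \in [set z1; z2; c2] by rewrite !inE eqxx !orbT.
have c2A1 : c2 \in ~: [set z1; z2; c1].
  by rewrite in_setC setUC in_setU1 negb_or c21 (common_neighbour_notin Hloop).
have := dicut_exchange Hloop Hdeg Hpair (S_card _ c1C) (S_card _ c2C) eqS c2S2
  cut1 cut2.
have := dicut_exchange (loopless_converse Hloop) (total_degree_converse Hdeg)
  (pair_degree_converse Hpair) (S_card _ c1C) (S_card _ c2C) eqS c2S2
  (dicut_converse cut1) (dicut_converse cut2).
by rewrite in_setD c2A1 andbT negbK => ->.
Qed.
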